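(* Let $G$ be a simple graph with $n$ vertices, let $S(G)$ be its Seidel matrix, and let $\theta_1,\ldots,\theta_n$ be the eigenvalues of $S(G)$. Then the following are equivalent: (i) $|\det S(G)|\ge n-1$; (ii) for every $\alpha$ with $0<\alpha<2$, $$|\theta_1|^\alpha+\cdots+|\theta_n|^\alpha\ge (n-1)^\alpha+(n-1).$$
   Context: For a simple graph $G$ with vertex set $\{v_1,\ldots,v_n\}$, the Seidel matrix $S(G)=(s_{ij})$ is the $n\times n$ matrix with $s_{ii}=0$ for all $i$, and for $i\ne j$, $s_{ij}=-1$ if $v_i$ and $v_j$ are adjacent and $s_{ij}=1$ otherwise. It is a real symmetric matrix, so its eigenvalues are real. *)

From HB Require Import structures.
From mathcomp Require Import all_boot all_order all_algebra.
From mathcomp Require Import all_classical all_reals all_analysis.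
Set Implicit Arguments. Unset Strict Implicit. Unset Printing Implicit Defensive.
Import Order.TTheory GRing.Theory Num.Theory.
Local Open Scope ring_scope.

Definition simple_graph (n : nat) (e : rel 'I_n) : Prop :=
  irreflexive e /\ symmetric e.

Definition seidel_mx (R : numDomainType) (n : nat) (e : rel 'I_n) : 'M[R]_n :=
  \matrix_(i, j) (if i == j then 0 else if e i j then -1 else 1).

(* theta is the list of eigenvalues (with multiplicity) of the square matrix A:
   the characteristic polynomial of A splits as prod_i (X - theta_i). *)
Definition eigenvalues_of (R : numDomainType) (n : nat) (A : 'M[R]_n)
  (theta : 'I_n -> R) : Prop :=
  char_poly A = \prod_(i < n) ('X - (theta i)%:P).

From HB Require Import structures.
From mathcomp Require Import all_boot all_order all_algebra.
From mathcomp Require Import all_classical all_reals all_analysis.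
From mathcomp Require Import ring lra.
Import Order.TTheory GRing.Theory Num.Theory.

Set Implicit Arguments.
Unset Strict Implicit.
Unset Printing Implicit Defensive.

Local Open Scope ring_scope.

(* Write the eigenvalues of the Seidel matrix as theta_i: their sum is tr S = 0, the sum
   of their squares is tr S^2 = n(n-1), and their product is det S.  These force
   theta_i^2 <= (n-1)^2.

   (i) -> (ii): with x_i = theta_i^2, M = (n-1)^2 and a = alpha/2 in (0,1), the function
   x^a = exp(a s), s = ln x, dominates an affine combination 1 + c s + d (e^s - 1) on
   s <= ln M, with c >= 0 and equality at s = ln M (the difference vanishes at 0 and
   ln M and is convex-then-concave).  Summing over i and using sum ln x_i >= ln M gives
   the bound.

   (ii) -> (i): let alpha -> 0.  To second order, sum |theta_i|^alpha is
   #{theta_i <> 0} + alpha sum ln|theta_i|, while the right-hand side is at least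
   n + alpha ln(n-1); this rules out a zero eigenvalue and forces
   sum ln|theta_i| >= ln(n-1). *)

Section MeanValue.
Variables (R : realType) (f df : R -> R).
Hypothesis f_df : forall z : R, is_derive z (1 : R) f (df z).

Lemma MVT_everywhere {x y} : x < y ->
  exists2 z, x < z < y & f y - f x = df z * (y - x).
Proof.
move=> xy; have [|z zi ->] := MVT xy (fun z _ => f_df z).
  apply: (@continuous_subspaceT _ R^o) => t.
  by apply/differentiable_continuous/derivable1_diffP; exact: ex_derive.
by exists z; rewrite // -in_itv.
Qed.

Lemma Rolle_everywhere x y : x < y -> f x = f y -> exists2 z, x < z < y & df z = 0.
Proof.
move=> xy fxy; have [z zi] := MVT_everywhere xy.
rewrite fxy subrr => /esym/eqP; rewrite mulf_eq0 subr_eq0 (gt_eqF xy) orbF.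
by exists z => //; apply/eqP.
Qed.

Lemma ger0_derive_le x y : x <= y -> (forall z, x < z < y -> 0 <= df z) -> f x <= f y.
Proof.
rewrite le_eqVlt => /predU1P[-> //|xy] df_ge0.
have [z zi fxy] := MVT_everywhere xy.
by rewrite -subr_ge0 fxy mulr_ge0 ?df_ge0 // subr_ge0 ltW.
Qed.

Lemma ler0_derive_ge x y : x <= y -> (forall z, x < z < y -> df z <= 0) -> f y <= f x.
Proof.
rewrite le_eqVlt => /predU1P[-> //|xy] df_le0.
have [z zi fxy] := MVT_everywhere xy.
by rewrite -subr_le0 fxy mulr_le0_ge0 ?df_le0 // subr_ge0 ltW.
Qed.

End MeanValue.

Section ExpAffineMinorant.
Variables (R : realType) (a c d L : R).
Hypotheses (a01 : 0 < a < 1) (cda : c + d = a) (L_gt0 : 0 < L).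

Let gap s := expR (a * s) - 1 - c * s - d * (expR s - 1).
Let dgap s := a * expR (a * s) - c - d * expR s.
Let d2gap s := a ^+ 2 * expR (a * s) - d * expR s.

Hypothesis gapL : gap L = 0.

Let gapP (s : R) : is_derive s (1 : R) gap (dgap s).
Proof.
by rewrite /gap /dgap; apply: trigger_derive; rewrite /GRing.scale /= !mulr1 !subr0; ring.
Qed.

Let dgapP (s : R) : is_derive s (1 : R) dgap (d2gap s).
Proof.
by rewrite /dgap /d2gap; apply: trigger_derive; rewrite /GRing.scale /= !mulr1 ?subr0; ring.
Qed.

Let gap0 : gap 0 = 0. Proof. by rewrite /gap !mulr0 expR0; ring. Qed.

Let dgap0 : dgap 0 = 0. Proof. by rewrite /dgap !mulr0 expR0 -cda; ring. Qed.

(* d2gap s has the sign of expR ((1 - a) * eta) - expR ((1 - a) * s). *)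
Let d2gap_sign eta s : d2gap eta = 0 ->
  (s <= eta -> 0 <= d2gap s) /\ (eta <= s -> d2gap s <= 0).
Proof.
have [a_gt0 a_lt1] := andP a01; move=> d2eta.
have expR_split t : expR t = expR (a * t) * expR ((1 - a) * t).
  by rewrite -expRD; congr expR; ring.
have a2E : a ^+ 2 = d * expR ((1 - a) * eta).
  apply: (mulIf (lt0r_neq0 (expR_gt0 (a * eta)))).
  rewrite -[RHS]mulrA [X in d * X]mulrC -expR_split.
  by apply/eqP; rewrite -subr_eq0; apply/eqP.
have d_gt0 : 0 < d.
  have : 0 < d * expR ((1 - a) * eta) by rewrite -a2E exprn_gt0.
  by rewrite pmulr_lgt0 // expR_gt0.
have -> : d2gap s = d * expR (a * s) * (expR ((1 - a) * eta) - expR ((1 - a) * s)).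
  by rewrite /d2gap a2E (expR_split s); ring.
have da_gt0 : 0 < d * expR (a * s) by rewrite mulr_gt0 // expR_gt0.
have a1_gt0 : 0 < 1 - a by rewrite subr_gt0.
by split=> les; rewrite ?pmulr_rge0 ?pmulr_rle0 // ?subr_ge0 ?subr_le0 ler_expR ler_pM2l.
Qed.

Lemma gap_ge0 s : s <= L -> 0 <= gap s.
Proof.
have [xi /andP[xi_gt0 xiL] dgap_xi] :=
  Rolle_everywhere gapP L_gt0 (etrans gap0 (esym gapL)).
have [eta /andP[eta_gt0 eta_xi] d2gap_eta] :=
  Rolle_everywhere dgapP xi_gt0 (etrans dgap0 (esym dgap_xi)).
have d2gap_ge0 z : z < eta -> 0 <= d2gap z.
  by move=> /ltW; apply: (d2gap_sign z d2gap_eta).1.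
have d2gap_le0 z : eta < z -> d2gap z <= 0.
  by move=> /ltW; apply: (d2gap_sign z d2gap_eta).2.
have dgap_le0_neg z : z <= 0 -> dgap z <= 0.
  move=> z_le0; rewrite -dgap0; apply: (ger0_derive_le dgapP z_le0).
  by move=> t /andP[_ t_lt0]; apply: d2gap_ge0; apply: lt_trans eta_gt0.
have dgap_ge0_mid z : 0 <= z <= xi -> 0 <= dgap z.
  case/andP=> z_ge0 z_le_xi; have [z_le_eta|eta_lt_z] := leP z eta.
    rewrite -dgap0; apply: (ger0_derive_le dgapP z_ge0).
    by move=> t /andP[_ tz]; apply: d2gap_ge0; apply: lt_le_trans z_le_eta.
  rewrite -dgap_xi; apply: (ler0_derive_ge dgapP z_le_xi).
  by move=> t /andP[zt _]; apply: d2gap_le0; apply: lt_trans zt.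
have dgap_le0_post z : xi <= z -> dgap z <= 0.
  move=> xi_le_z; rewrite -dgap_xi; apply: (ler0_derive_ge dgapP xi_le_z).
  by move=> t /andP[xit _]; apply: d2gap_le0; apply: lt_trans xit.
move=> sL; have [s_le0|s_gt0] := leP s 0.
  rewrite -gap0; apply: (ler0_derive_ge gapP s_le0).
  by move=> t /andP[_ /ltW]; apply: dgap_le0_neg.
have [s_le_xi|xi_lt_s] := leP s xi.
  rewrite -gap0; apply: (ger0_derive_le gapP (ltW s_gt0)) => t /andP[t_gt0 ts].
  by apply: dgap_ge0_mid; rewrite !ltW // (lt_le_trans ts).
rewrite -gapL; apply: (ler0_derive_ge gapP sL) => t /andP[st _].
by apply: dgap_le0_post; rewrite ltW // (lt_trans xi_lt_s).
Qed.

(* As s -> -oo, gap s behaves like - c * s. *)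
Lemma gap_coef_ge0 : 0 <= c.
Proof.
have [a_gt0 _] := andP a01; rewrite leNgt; apply/negP => c_lt0.
pose s := (2 * `|d| + 1) / c.
have s_lt0 : s < 0 by rewrite /s ltr_ndivrMr // mul0r; have := normr_ge0 d; lra.
have cs : c * s = 2 * `|d| + 1 by rewrite /s mulrC divfK // ltr0_neq0.
have eas_le1 : expR (a * s) <= 1.
  by rewrite -expR0 ler_expR; apply: ltW; rewrite pmulr_rlt0.
have es_le1 : expR s <= 1 by rewrite -expR0 ler_expR ltW.
have des : - d * expR s <= `|d|.
  rewrite (le_trans (ler_norm _)) // normrM normrN (ger0_norm (expR_ge0 _)).
  by rewrite ler_piMr.
have := gap_ge0 (le_trans (ltW s_lt0) (ltW L_gt0)).
have := ler_norm d; rewrite /gap; lra.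
Qed.

End ExpAffineMinorant.

Lemma expR_affine_minorant (R : realType) (a L : R) : 0 < a < 1 -> 0 <= L ->
  exists c d : R, [/\ 0 <= c, expR (a * L) = 1 + c * L + d * (expR L - 1)
  & forall s, s <= L -> 1 + c * s + d * (expR s - 1) <= expR (a * s)].
Proof.
move=> a01; rewrite le_eqVlt => /predU1P[<-|L_gt0].
  exists a, 0; split=> [||s _]; first by case/andP: a01 => /ltW.
    by rewrite !mulr0 expR0; ring.
  by rewrite mul0r addr0 expR_ge1Dx.
pose c := (1 + a * (expR L - 1) - expR (a * L)) / (expR L - 1 - L).
have L_den : expR L - 1 - L != 0.
  by have := expR_gt1Dx (lt0r_neq0 L_gt0); rewrite -subr_gt0 => ?; rewrite lt0r_neq0 //; lra.
have cda : c + (a - c) = a by ring.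
have gapL : expR (a * L) - 1 - c * L - (a - c) * (expR L - 1) = 0 by rewrite /c; field.
exists c, (a - c); split=> [||s sL].
- exact: gap_coef_ge0 cda L_gt0 gapL.
- by apply/eqP; rewrite -subr_eq0 -gapL; apply/eqP; ring.
- by rewrite -subr_ge0 (_ : _ - _ = expR (a * s) - 1 - c * s - (a - c) * (expR s - 1));
    [exact: gap_ge0 cda L_gt0 gapL s sL | ring].
Qed.

Lemma le0_of_le_mulr_small (R : realFieldType) (x y delta : R) : 0 < delta ->
  (forall alpha, 0 < alpha -> alpha <= delta -> x <= alpha * y) -> x <= 0.
Proof.
move=> delta_gt0 small; apply/ler_addgt0Pr => eps eps_gt0; rewrite add0r.
pose alpha := Num.min delta (eps / (`|y| + 1)).
have y1_gt0 : 0 < `|y| + 1 by rewrite ltr_wpDl.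
have alpha_gt0 : 0 < alpha by rewrite lt_min delta_gt0 divr_gt0.
have alpha_le : alpha <= delta by rewrite ge_min lexx.
have y_le : alpha * y <= alpha * `|y| := ler_wpM2l (ltW alpha_gt0) (ler_norm y).
have alpha_le' : alpha <= eps / (`|y| + 1) by rewrite ge_min lexx orbT.
have norm_le : alpha * `|y| <= eps / (`|y| + 1) * `|y| := ler_wpM2r (normr_ge0 y) alpha_le'.
have eps_le : eps / (`|y| + 1) * `|y| <= eps.
  by rewrite mulrAC ler_pdivrMr // ler_pM2l // lerDl.
have := small alpha alpha_gt0 alpha_le; lra.
Qed.

Lemma sqr_le_of_sum0 (R : realDomainType) n (theta : 'I_n -> R) i :
    (1 < n)%N -> \sum_j theta j = 0 ->
  n%:R * theta i ^+ 2 <= (n - 1)%:R * \sum_j theta j ^+ 2.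
Proof.
move=> n_gt1 sum0; set m : R := (n - 1)%:R.
have nE : n%:R = m + 1 by rewrite /m natrB ?subrK // ltnW.
have m_gt0 : 0 < m by rewrite /m ltr0n subn_gt0.
(* The i-th term of the sum below is (n theta_i)^2, and sum0 simplifies the whole sum. *)
have expand : \sum_j (m * theta j + theta i) ^+ 2 =
    m ^+ 2 * \sum_j theta j ^+ 2 + n%:R * theta i ^+ 2.
  transitivity (\sum_j (m ^+ 2 * theta j ^+ 2 + 2 * m * theta i * theta j + theta i ^+ 2)).
    by apply: eq_bigr => j _; ring.
  rewrite !big_split /= -!mulr_sumr sum0 sumr_const card_ord -mulr_natl; ring.
have : (m * theta i + theta i) ^+ 2 <= \sum_j (m * theta j + theta i) ^+ 2.
  by rewrite (bigD1 i) //= lerDl; apply: sumr_ge0 => j _; exact: sqr_ge0.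
rewrite expand nE => le_sum.
rewrite -subr_ge0 -(pmulr_rge0 _ m_gt0).
have -> : m * (m * \sum_j theta j ^+ 2 - (m + 1) * theta i ^+ 2) =
  m ^+ 2 * \sum_j theta j ^+ 2 + (m + 1) * theta i ^+ 2 - (m * theta i + theta i) ^+ 2 by ring.
by rewrite subr_ge0.
Qed.

Section PowerSums.
Variables (R : realType) (n : nat).
Implicit Types (x theta : 'I_n -> R).

Lemma sum_powR_ge x (a M : R) : 0 < a < 1 -> 1 <= M ->
    (forall i, 0 < x i <= M) -> M <= \prod_i x i -> \sum_i x i = M + n%:R - 1 ->
  M `^ a + n%:R - 1 <= \sum_i x i `^ a.
Proof.
move=> a01 M_ge1 x_bnd M_le_prod sum_x.
have x_gt0 i : 0 < x i by case/andP: (x_bnd i).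
have M_gt0 : 0 < M := lt_le_trans ltr01 M_ge1.
have [c [d [c_ge0 minorM minor]]] := expR_affine_minorant a01 (ln_ge0 M_ge1).
have powRE y : 0 < y -> y `^ a = expR (a * ln y) by move=> /gt_eqF y0; rewrite /powR y0.
have term i : 1 + c * ln (x i) + d * (x i - 1) <= x i `^ a.
  have ln_le : ln (x i) <= ln M by rewrite ler_ln ?posrE //; case/andP: (x_bnd i).
  by have := minor _ ln_le; rewrite lnK ?posrE // powRE.
have ln_prod : ln M <= \sum_i ln (x i).
  rewrite -ler_expR lnK ?posrE // expR_sum.
  by under eq_bigr do rewrite lnK ?posrE //.
apply: le_trans (ler_sum _ (fun i _ => term i)).
rewrite big_split big_split /= -!mulr_sumr sumrB sum_x !sumr_const card_ord powRE //.
rewrite minorM lnK ?posrE //.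
have : c * ln M <= c * \sum_i ln (x i) by rewrite ler_wpM2l.
lra.
Qed.

Lemma sum_powR_ge_of_moments theta : (1 < n)%N -> \sum_i theta i = 0 ->
    \sum_i theta i ^+ 2 = (n * (n - 1))%:R -> (n - 1)%:R <= `|\prod_i theta i| ->
  forall alpha : R, 0 < alpha -> alpha < 2 ->
  ((n - 1)%:R) `^ alpha + (n - 1)%:R <= \sum_i `|theta i| `^ alpha.
Proof.
move=> n_gt1 sum1 sum2 prod_ge alpha alpha_gt0 alpha_lt2.
set m : R := (n - 1)%:R in prod_ge *.
have nE : n%:R = m + 1 by rewrite /m natrB ?subrK // ltnW.
have m_ge1 : 1 <= m by rewrite /m ler1n subn_gt0.
have theta_neq0 i : theta i != 0.
  by apply: contraTneq prod_ge => theta0; rewrite (bigD1 i) //= theta0 mul0r normr0 -ltNge; lra.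
have sqr_le i : theta i ^+ 2 <= m ^+ 2.
  have := sqr_le_of_sum0 i n_gt1 sum1; rewrite sum2 natrM -/m nE.
  rewrite (_ : m * _ = (m + 1) * m ^+ 2); last by ring.
  by rewrite ler_pM2l //; lra.
have powR_sqr y : `|y| `^ alpha = (y ^+ 2) `^ (alpha / 2).
  by rewrite -real_normK ?num_real // -powR_mulrn // -powRrM mulrC divfK.
rewrite (eq_bigr _ (fun i _ => powR_sqr (theta i))).
rewrite -[m in m `^ alpha](ger0_norm (le_trans ler01 m_ge1)) powR_sqr.
rewrite [_ + m](_ : _ = (m ^+ 2) `^ (alpha / 2) + n%:R - 1); last by rewrite nE; ring.
apply: sum_powR_ge; first by apply/andP; lra.
- by rewrite exprn_ege1.
- by move=> i; rewrite sqr_le andbT exprn_even_gt0 // theta_neq0 orbT.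
- by rewrite prodrXl -[X in _ <= X]real_normK ?num_real // lerXn2r // nnegrE (le_trans ler01).
- by rewrite sum2 natrM -/m nE; ring.
Qed.

Lemma expR_le_quad (y : R) : y <= 1/2 -> expR y <= 1 + y + 2 * y ^+ 2.
Proof.
move=> y_le; have y1_gt0 : 0 < 1 - y by lra.
have expR_mul_le1 : expR y * (1 - y) <= 1.
  have := ler_wpM2l (expR_ge0 y) (expR_ge1Dx (- y)).
  by rewrite expRN mulfV ?gt_eqF ?expR_gt0.
have quad_mul_ge1 : 1 <= (1 + y + 2 * y ^+ 2) * (1 - y).
  have : 0 <= y ^+ 2 * (1 - 2 * y) by rewrite mulr_ge0 ?sqr_ge0 //; lra.
  by rewrite -subr_ge0 (_ : _ - 1 = y ^+ 2 * (1 - 2 * y)) //; ring.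
by rewrite -(ler_pM2r y1_gt0) (le_trans expR_mul_le1 quad_mul_ge1).
Qed.

Lemma powR_le_quad (y alpha : R) : 0 < alpha -> alpha * `|ln `|y| | <= 1/2 ->
  `|y| `^ alpha + (y == 0)%:R <= 1 + alpha * ln `|y| + 2 * alpha ^+ 2 * ln `|y| ^+ 2.
Proof.
move=> alpha_gt0 small; have [->|y_neq0] := eqVneq y 0.
  by rewrite normr0 powR0 ?gt_eqF // ln0 // mulr0 expr0n /= mulr0 !addr0 add0r.
rewrite addr0 /powR normr_eq0 (negbTE y_neq0).
have small' : alpha * ln `|y| <= 1/2.
  by apply: le_trans (ler_norm _) _; rewrite normrM (gtr0_norm alpha_gt0).
by have := expR_le_quad small'; rewrite exprMn; lra.
Qed.

Lemma prod_ge_of_sum_powR_ge x (m : R) : (0 < n)%N -> 0 < m ->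
    (forall alpha : R, 0 < alpha -> alpha < 2 ->
       m `^ alpha + (n - 1)%:R <= \sum_i `|x i| `^ alpha) ->
  m <= `|\prod_i x i|.
Proof.
move=> n_gt0 m_gt0 sum_ge.
set l := ln m; set W := \sum_i ln `|x i|; set Q := \sum_i ln `|x i| ^+ 2.
set Z := \sum_i ((x i == 0)%:R : R); set K := 1 + \sum_i `|ln `|x i| |.
have Q_ge0 : 0 <= Q by apply: sumr_ge0 => i _; exact: sqr_ge0.
have Z_ge0 : 0 <= Z by apply: sumr_ge0 => i _; exact: ler0n.
have K_ge1 : 1 <= K by rewrite lerDl; apply: sumr_ge0.
have lnx_le i : `|ln `|x i| | <= K.
  have : `|ln `|x i| | <= \sum_j `|ln `|x j| | by rewrite (bigD1 i) //= lerDl sumr_ge0.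
  by rewrite /K; lra.
pose delta := (2 * K)^-1.
have deltaK : delta * K = 1/2 by rewrite /delta; field; lra.
have delta_gt0 : 0 < delta by rewrite invr_gt0; lra.
have expansion alpha : 0 < alpha -> alpha <= delta ->
    Z + alpha * (l - W) <= alpha ^+ 2 * (2 * Q).
  move=> alpha_gt0 alpha_le.
  have alphaK : alpha * K <= 1/2 by rewrite -deltaK ler_wpM2r // (le_trans ler01).
  have alpha_lt2 : alpha < 2.
    have : alpha <= alpha * K by rewrite ler_peMr // ltW.
    lra.
  have upper : \sum_i `|x i| `^ alpha + Z <= n%:R + alpha * W + 2 * alpha ^+ 2 * Q.
    have small i : alpha * `|ln `|x i| | <= 1/2.
      by apply: le_trans alphaK; rewrite ler_pM2l.
    rewrite -big_split /=; apply: le_trans (_ : _ <= \sum_i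
      (1 + alpha * ln `|x i| + 2 * alpha ^+ 2 * ln `|x i| ^+ 2)) _.
      by apply: ler_sum => i _; apply: powR_le_quad.
    by rewrite !big_split /= sumr_const card_ord -!mulr_sumr.
  have lower : 1 + alpha * l <= m `^ alpha by rewrite /powR gt_eqF // expR_ge1Dx.
  have := sum_ge alpha alpha_gt0 alpha_lt2.
  by rewrite natrB // mulr1n; lra.
have Z_le0 : Z <= 0.
  apply: (le0_of_le_mulr_small (y := delta * (2 * Q) + `|l - W|) delta_gt0).
  move=> alpha alpha_gt0 alpha_le.
  have sq_le : alpha ^+ 2 * (2 * Q) <= alpha * (delta * (2 * Q)).
    rewrite expr2 -mulrA; apply: (ler_wpM2l (ltW alpha_gt0)).
    by apply: (ler_wpM2r _ alpha_le); rewrite mulr_ge0.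
  have lin_le : - (alpha * (l - W)) <= alpha * `|l - W|.
    by rewrite -mulrN; apply: (ler_wpM2l (ltW alpha_gt0)); rewrite -normrN ler_norm.
  by have := expansion alpha alpha_gt0 alpha_le; lra.
have x_neq0 i : x i != 0.
  have : Z = 0 by apply/eqP; rewrite eq_le Z_le0 Z_ge0.
  move/(psumr_eq0P (fun j _ => ler0n R (x j == 0)))/(_ i isT).
  by case: (x i == 0) => // /eqP; rewrite oner_eq0.
have lW : l - W <= 0.
  apply: (le0_of_le_mulr_small (y := 2 * Q) delta_gt0) => alpha alpha_gt0 alpha_le.
  rewrite -(ler_pM2l alpha_gt0) mulrA -expr2.
  by have := expansion alpha alpha_gt0 alpha_le; lra.
rewrite -(lnK (_ : m \in Num.pos)) ?posrE // -/l normr_prod.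
rewrite (eq_bigr (fun i => expR (ln `|x i|))) => [|i _]; last first.
  by rewrite lnK // posrE normr_gt0.
by rewrite -expR_sum ler_expR -/W; lra.
Qed.

End PowerSums.

Lemma horner_char_poly (R : comNzRingType) n (A : 'M[R]_n) x :
  (char_poly A).[x] = \det (x%:M - A).
Proof.
rewrite horner_sum; apply: eq_bigr => s _.
rewrite hornerM horner_exp !hornerE; congr (_ * _).
rewrite (big_morph _ (fun p q => hornerM p q x) (hornerC 1 x)).
by apply: eq_bigr => i _; rewrite !mxE !(hornerE, hornerMn).
Qed.

Section CharPolySplit.
Variables (R : comNzRingType) (n : nat) (A : 'M[R]_n) (theta : 'I_n -> R).
Hypothesis Atheta : char_poly A = \prod_(i < n) ('X - (theta i)%:P).

Let Atheta_seq :
  char_poly A = \prod_(x <- [seq theta i | i <- enum 'I_n]) ('X - x%:P).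
Proof. by rewrite big_map big_enum. Qed.

Lemma det_prod_eigenvalues : \det A = \prod_(i < n) theta i.
Proof.
apply: (can_inj (signrMK n)); rewrite -char_poly_det Atheta_seq.
by rewrite coef0_prod_XsubC size_map size_enum_ord big_map_id big_enum.
Qed.

Lemma mxtrace_sum_eigenvalues : \tr A = \sum_(i < n) theta i.
Proof.
have [n0|n_gt0] := posnP n.
  by rewrite /mxtrace !big1 // => i; have := ltn_ord i; rewrite [X in (_ < X)%N]n0.
apply: oppr_inj; rewrite -char_poly_trace // Atheta_seq.
have := @coefPn_prod_XsubC _ [seq theta i | i <- enum 'I_n].
rewrite size_map size_enum_ord -lt0n n_gt0 => -> //.
by congr (- _); rewrite big_map_id big_enum.
Qed.

End CharPolySplit.

Lemma char_poly_mulmx_self (R : numDomainType) n (A : 'M[R]_n) theta :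
    char_poly A = \prod_(i < n) ('X - (theta i)%:P) ->
  char_poly (A *m A) = \prod_(i < n) ('X - (theta i ^+ 2)%:P).
Proof.
move=> Atheta.
have at_squares x : (char_poly (A *m A)).[x ^+ 2] =
    (\prod_(i < n) ('X - (theta i ^+ 2)%:P)).[x ^+ 2].
  rewrite horner_char_poly.
  have -> : (x ^+ 2)%:M - A *m A = (x%:M - A) *m (x%:M + A).
    by rewrite mulmxBl !mulmxDr -scalar_mxM scalar_mxC expr2 opprD addrA addrK.
  have -> : x%:M + A = (-1) *: ((- x)%:M - A).
    by rewrite scaleN1r opprB raddfN /= opprK addrC.
  rewrite det_mulmx detZ -!horner_char_poly Atheta !horner_prod.
  under [X in _ * (_ * X)]eq_bigr do rewrite hornerXsubC -opprD.
  rewrite prodrN card_ord [X in _ * X]mulrA -exprMn mulrNN mulr1 expr1n mul1r.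
  by rewrite -big_split; apply: eq_bigr => i _; rewrite /= !hornerXsubC; ring.
apply/eqP; rewrite -subr_eq0; apply/eqP.
set p := _ - _.
apply: (@roots_geq_poly_eq0 _ _ [seq (k%:R : R) ^+ 2 | k <- iota 0 (size p)]).
- by apply/allP => y /mapP [k _ ->]; rewrite rootE /p hornerD hornerN at_squares subrr.
- rewrite map_inj_uniq ?iota_uniq // => k l; rewrite -!natrX => /eqP.
  by rewrite eqr_nat eqn_exp2r // => /eqP.
- by rewrite size_map size_iota.
Qed.

Section SeidelMatrix.
Variables (R : numDomainType) (n : nat) (e : rel 'I_n).

Lemma mxtrace_seidel : \tr (seidel_mx R e) = 0.
Proof. by rewrite /mxtrace big1 // => i _; rewrite mxE eqxx. Qed.

Lemma mxtrace_seidel_sqr : symmetric e ->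
  \tr (seidel_mx R e *m seidel_mx R e) = (n * (n - 1))%:R.
Proof.
move=> e_sym; have row_norm i : (seidel_mx R e *m seidel_mx R e) i i = (n - 1)%:R.
  rewrite mxE (bigD1 i) //= !mxE eqxx mul0r add0r.
  rewrite (eq_bigr (fun _ => 1)) => [|j ji]; last first.
    by rewrite !mxE eq_sym (negbTE ji) e_sym; case: (e j i); rewrite ?mulrNN mulr1.
  by rewrite sumr_const cardC1 card_ord subn1.
by rewrite /mxtrace (eq_bigr _ (fun i _ => row_norm i)) sumr_const card_ord natrM mulr_natl.
Qed.

End SeidelMatrix.

Theorem theorem1p1 (R : realType) (n : nat) (e : rel 'I_n)
  (hn : (0 < n)%N) (hG : simple_graph e)
  (theta : 'I_n -> R) (htheta : eigenvalues_of (seidel_mx R e) theta) :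
  (`|\det (seidel_mx R e)| >= (n - 1)%:R) <->
  (forall alpha : R, 0 < alpha -> alpha < 2 ->
     \sum_(i < n) `|theta i| `^ alpha >= ((n - 1)%:R) `^ alpha + (n - 1)%:R).
Proof.
have [_ e_sym] := hG.
have sum1 : \sum_i theta i = 0.
  by rewrite -(mxtrace_sum_eigenvalues htheta) mxtrace_seidel.
have sum2 : \sum_i theta i ^+ 2 = (n * (n - 1))%:R.
  by rewrite -(mxtrace_sum_eigenvalues (char_poly_mulmx_self htheta)) mxtrace_seidel_sqr.
rewrite (det_prod_eigenvalues htheta).
have [n_le1|n_gt1] := leqP n 1.
  have -> : (n - 1)%N = 0%N by apply/eqP; rewrite subn_eq0.
  split=> [_ alpha alpha_gt0 _|_]; last exact: normr_ge0.
  by rewrite powR0 ?gt_eqF // addr0 sumr_ge0 // => i _; exact: powR_ge0.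
split; first exact: sum_powR_ge_of_moments.
by apply: prod_ge_of_sum_powR_ge; rewrite // ltr0n subn_gt0.
Qed.
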